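(* Let $(\mathcal{P},\cdot)$ be an admissible Poisson algebra and $\varphi:\mathcal{P}\times\mathcal{P}\to\mathcal{P}$ bilinear with symmetric part $\varphi_s$ and skew-symmetric part $\varphi_a$. If $\delta^2_{\mathcal{P}}\varphi=0$, then $\delta_H\varphi_s=0$ (a Harrison $2$-cocycle of $\mathcal{A}_{\mathcal{P}}$) and $\delta_C\varphi_a=0$ (a Chevalley $2$-cocycle of $\mathfrak{g}_{\mathcal{P}}$).
   Context: $\mathbb{K}$ is a field of characteristic different from $2$ and $3$. Associator: $A(X,Y,Z)=(X\cdot Y)\cdot Z-X\cdot(Y\cdot Z)$. An admissible Poisson algebra is a $\mathbb{K}$-vector space $\mathcal{P}$ with a bilinear product $\cdot$ satisfying $3A(X,Y,Z)=(X\cdot Z)\cdot Y+(Y\cdot Z)\cdot X-(Y\cdot X)\cdot Z-(Z\cdot X)\cdot Y$; $\{X,Y\}=\frac12(X\cdot Y-Y\cdot X)$, $X\bullet Y=\frac12(X\cdot Y+Y\cdot X)$, $\mathfrak{g}_{\mathcal{P}}=(\mathcal{P},\{\,,\,\})$, $\mathcal{A}_{\mathcal{P}}=(\mathcal{P},\bullet)$. $\varphi_a(X,Y)=\frac12(\varphi(X,Y)-\varphi(Y,X))$, $\varphi_s(X,Y)=\frac12(\varphi(X,Y)+\varphi(Y,X))$. For a bilinear $\varphi$: $\delta^2_{\mathcal{P}}\varphi(X,Y,Z)=3\varphi(X\cdot Y,Z)-3\varphi(X,Y\cdot Z)-\varphi(X\cdot Z,Y)-\varphi(Y\cdot Z,X)+\varphi(Y\cdot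 X,Z)+\varphi(Z\cdot X,Y)+3\varphi(X,Y)\cdot Z-3X\cdot\varphi(Y,Z)-\varphi(X,Z)\cdot Y-\varphi(Y,Z)\cdot X+\varphi(Y,X)\cdot Z+\varphi(Z,X)\cdot Y$. For $\psi$ bilinear: $\delta_C\psi(X,Y,Z)=\{\psi(X,Y),Z\}+\{\psi(Y,Z),X\}+\{\psi(Z,X),Y\}+\psi(\{X,Y\},Z)+\psi(\{Y,Z\},X)+\psi(\{Z,X\},Y)$ and $\delta_H\psi(X,Y,Z)=\psi(X,Y)\bullet Z-X\bullet\psi(Y,Z)+\psi(X\bullet Y,Z)-\psi(X,Y\bullet Z)$. *)

From HB Require Import structures.
From mathcomp Require Import all_boot all_algebra.
Set Implicit Arguments. Unset Strict Implicit. Unset Printing Implicit Defensive.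
Import GRing.Theory.
Local Open Scope ring_scope.

Definition bilinear_map (K : fieldType) (P : lmodType K) (m : P -> P -> P) :=
  (forall a x y z, m (a *: x + y) z = a *: m x z + m y z) /\
  (forall a x y z, m x (a *: y + z) = a *: m x y + m x z).

Definition assoc (K : fieldType) (P : lmodType K) (m : P -> P -> P) (X Y Z : P) :=
  m (m X Y) Z - m X (m Y Z).

Definition admissible_poisson (K : fieldType) (P : lmodType K) (m : P -> P -> P) :=
  forall X Y Z : P,
    assoc m X Y Z *+ 3 =
    m (m X Z) Y + m (m Y Z) X - m (m Y X) Z - m (m Z X) Y.

Definition pbracket (K : fieldType) (P : lmodType K) (m : P -> P -> P) (X Y : P) :=
  (2%:R : K)^-1 *: (m X Y - m Y X).
Definition pbullet (K : fieldType) (P : lmodType K) (m : P -> P -> P) (X Y : P) :=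
  (2%:R : K)^-1 *: (m X Y + m Y X).

Definition skew_part (K : fieldType) (P : lmodType K) (phi : P -> P -> P) (X Y : P) :=
  (2%:R : K)^-1 *: (phi X Y - phi Y X).
Definition sym_part (K : fieldType) (P : lmodType K) (phi : P -> P -> P) (X Y : P) :=
  (2%:R : K)^-1 *: (phi X Y + phi Y X).

Definition delta2 (K : fieldType) (P : lmodType K) (m : P -> P -> P)
    (phi : P -> P -> P) (X Y Z : P) : P :=
  phi (m X Y) Z *+ 3 - phi X (m Y Z) *+ 3 - phi (m X Z) Y - phi (m Y Z) X
  + phi (m Y X) Z + phi (m Z X) Y
  + m (phi X Y) Z *+ 3 - m X (phi Y Z) *+ 3 - m (phi X Z) Y - m (phi Y Z) X
  + m (phi Y X) Z + m (phi Z X) Y.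

Definition deltaC (K : fieldType) (P : lmodType K) (m : P -> P -> P)
    (psi : P -> P -> P) (X Y Z : P) : P :=
  let br := pbracket m in
  br (psi X Y) Z + br (psi Y Z) X + br (psi Z X) Y
  + psi (br X Y) Z + psi (br Y Z) X + psi (br Z X) Y.

Definition deltaH (K : fieldType) (P : lmodType K) (m : P -> P -> P)
    (psi : P -> P -> P) (X Y Z : P) : P :=
  let bu := pbullet m in
  bu (psi X Y) Z - bu X (psi Y Z) + psi (bu X Y) Z - psi X (bu Y Z).

(* Both cocycle conditions are linear consequences of [delta2 phi = 0] alone:
   symmetrising [delta2] over the transposition of its two outer arguments
   kills the skew part of phi and yields 12 [deltaH phi_s], while the
   alternating sum of [delta2] over all permutations yields 12 [deltaC phi_a].  Since 2 and 3 are
   invertible, both coboundaries vanish.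

   The two identities are checked by [ring] after embedding the module into
   the commutative ring [K * V] with [V] squared to zero: every term of the
   identities is linear in [V], so it lives in that ring faithfully. *)

From HB Require Import structures.
From mathcomp Require Import all_boot all_algebra.
From mathcomp Require Import ring.
Set Implicit Arguments.
Unset Strict Implicit.
Import GRing.Theory.
Local Open Scope ring_scope.

Section TrivialExtension.
Variables (K : fieldType) (V : lmodType K).

Definition trivext := (K * V)%type.
HB.instance Definition _ := GRing.Zmodule.on trivext.

Definition trivext_one : trivext := (1, 0).
Definition trivext_mul (u v : trivext) : trivext :=
  (u.1 * v.1, u.1 *: v.2 + v.1 *: u.2).

Lemma trivext_mulA : associative trivext_mul.
Proof.
move=> [a u] [b v] [c w]; congr pair; first by rewrite /= mulrA.
by rewrite /= !scalerDr !scalerA addrA (mulrC c a) (mulrC c b).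
Qed.

Lemma trivext_mulC : commutative trivext_mul.
Proof. by move=> [a u] [b v]; rewrite /trivext_mul /= mulrC addrC. Qed.

Lemma trivext_mul1 : left_id trivext_one trivext_mul.
Proof. by move=> [a u]; rewrite /trivext_mul /= mul1r scale1r scaler0 addr0. Qed.

Lemma trivext_mulDl : left_distributive trivext_mul +%R.
Proof.
move=> [a u] [b v] [c w]; congr pair; first by rewrite /= mulrDl.
by rewrite /= scalerDl scalerDr addrACA.
Qed.

Lemma trivext_one_neq0 : trivext_one != 0.
Proof. by apply/eqP => -[] /eqP; rewrite oner_eq0. Qed.

HB.instance Definition _ := GRing.Zmodule_isComNzRing.Build trivext
  trivext_mulA trivext_mulC trivext_mul1 trivext_mulDl trivext_one_neq0.

Definition trivext_vec (v : V) : trivext := (0, v).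
Definition trivext_scal (k : K) : trivext := (k, 0).

Lemma trivext_vecD u v : trivext_vec (u + v) = trivext_vec u + trivext_vec v.
Proof. by congr pair; rewrite /= addr0. Qed.

Lemma trivext_vecN v : trivext_vec (- v) = - trivext_vec v.
Proof. by congr pair; rewrite /= oppr0. Qed.

Lemma trivext_vecMn v n : trivext_vec (v *+ n) = trivext_vec v *+ n.
Proof. by elim: n => // n IH; rewrite !mulrS trivext_vecD IH. Qed.

Lemma trivext_scalM a b : trivext_scal (a * b) = trivext_scal a * trivext_scal b.
Proof.
by rewrite /trivext_scal [RHS]/(GRing.mul _ _) /= /trivext_mul /= !scaler0 addr0.
Qed.

Lemma trivext_scal_nat n : trivext_scal n%:R = n%:R.
Proof.
elim: n => // n IH; rewrite !mulrS -IH.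
by congr pair; rewrite /= addr0.
Qed.

Lemma trivext_vecZ k v : trivext_vec (k *: v) = trivext_scal k * trivext_vec v.
Proof.
rewrite /trivext_vec /trivext_scal [RHS]/(GRing.mul _ _) /= /trivext_mul /=.
by rewrite mulr0 scale0r addr0.
Qed.

Lemma trivext_vec_inj : injective trivext_vec.
Proof. by move=> u v []. Qed.

End TrivialExtension.

Section Bilinear.
Variables (K : fieldType) (P : lmodType K) (f : P -> P -> P).
Hypothesis f_bilinear : bilinear_map f.

Lemma bilinDl x y z : f (x + y) z = f x z + f y z.
Proof. by have := f_bilinear.1 1 x y z; rewrite !scale1r. Qed.

Lemma bilinDr x y z : f z (x + y) = f z x + f z y.
Proof. by have := f_bilinear.2 1 z x y; rewrite !scale1r. Qed.

Lemma bilin0l z : f 0 z = 0.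
Proof. by apply: (addIr (f 0 z)); rewrite -bilinDl !add0r. Qed.

Lemma bilin0r z : f z 0 = 0.
Proof. by apply: (addIr (f z 0)); rewrite -bilinDr !add0r. Qed.

Lemma bilinZl a x z : f (a *: x) z = a *: f x z.
Proof. by have := f_bilinear.1 a x 0 z; rewrite !addr0 bilin0l addr0. Qed.

Lemma bilinZr a x z : f z (a *: x) = a *: f z x.
Proof. by have := f_bilinear.2 a z x 0; rewrite !addr0 bilin0r addr0. Qed.

Lemma bilinNl x z : f (- x) z = - f x z.
Proof. by rewrite -scaleN1r bilinZl scaleN1r. Qed.

Lemma bilinNr x z : f z (- x) = - f z x.
Proof. by rewrite -scaleN1r bilinZr scaleN1r. Qed.

Lemma bilinMnl x n z : f (x *+ n) z = f x z *+ n.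
Proof. by elim: n => [|n IH]; rewrite ?bilin0l // !mulrS bilinDl IH. Qed.

Lemma bilinMnr x n z : f z (x *+ n) = f z x *+ n.
Proof. by elim: n => [|n IH]; rewrite ?bilin0r // !mulrS bilinDr IH. Qed.

End Bilinear.

Section CoboundaryIdentities.
Variables (K : fieldType) (P : lmodType K) (m phi : P -> P -> P).
Hypotheses (m_bilinear : bilinear_map m) (phi_bilinear : bilinear_map phi).
Hypothesis two_neq0 : (2%:R : K) != 0.

Let bilinE (f : P -> P -> P) (hf : bilinear_map f) :=
  (bilinDl hf, bilinDr hf, bilinZl hf, bilinZr hf,
   bilinNl hf, bilinNr hf, bilinMnl hf, bilinMnr hf).

Let trivextE :=
  (@trivext_vecD K P, @trivext_vecN K P, @trivext_vecMn K P,
   @trivext_vecZ K P, @trivext_scalM K P, @trivext_scal_nat K P).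

Let quarter_mul4 : (2%:R^-1 * 2%:R^-1 * 4%:R : K) = 1.
Proof. by field. Qed.

Lemma deltaH_sym_part_delta2 X Y Z :
  deltaH m (sym_part phi) X Y Z *+ 12 =
  delta2 m phi X Y Z + delta2 m phi X Z Y
  - delta2 m phi Z X Y - delta2 m phi Z Y X.
Proof.
rewrite -[RHS]scale1r -quarter_mul4; apply: (@trivext_vec_inj K P).
rewrite /deltaH /delta2 /pbullet /sym_part !(bilinE m_bilinear).
rewrite !(bilinE phi_bilinear) !trivextE.
ring.
Qed.

Lemma deltaC_skew_part_delta2 X Y Z :
  deltaC m (skew_part phi) X Y Z *+ 12 =
  delta2 m phi X Y Z - delta2 m phi X Z Y - delta2 m phi Y X Z
  + delta2 m phi Y Z X + delta2 m phi Z X Y - delta2 m phi Z Y X.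
Proof.
rewrite -[RHS]scale1r -quarter_mul4; apply: (@trivext_vec_inj K P).
rewrite /deltaC /delta2 /pbracket /skew_part !(bilinE m_bilinear).
rewrite !(bilinE phi_bilinear) !trivextE.
ring.
Qed.

End CoboundaryIdentities.

Lemma lmod_mulrn_eq0 (K : fieldType) (V : lmodType K) (v : V) n :
  (n%:R : K) != 0 -> v *+ n = 0 -> v = 0.
Proof.
move=> n_neq0; rewrite -scaler_nat => /eqP.
by rewrite scaler_eq0 (negPf n_neq0) => /eqP.
Qed.

Theorem mainTheorem16 (K : fieldType) (P : lmodType K) (m phi : P -> P -> P) :
  (2%:R : K) != 0 -> (3%:R : K) != 0 ->
  bilinear_map m -> admissible_poisson m ->
  bilinear_map phi ->
  (forall X Y Z, delta2 m phi X Y Z = 0) ->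
  (forall X Y Z, deltaH m (sym_part phi) X Y Z = 0) /\
  (forall X Y Z, deltaC m (skew_part phi) X Y Z = 0).
Proof.
move=> two_neq0 three_neq0 m_bilinear _ phi_bilinear delta2_eq0.
have twelve_neq0 : (12%:R : K) != 0.
  by rewrite (natrM K 4 3) (natrM K 2 2) !mulf_neq0.
split=> X Y Z; apply: (lmod_mulrn_eq0 twelve_neq0).
- rewrite (deltaH_sym_part_delta2 m_bilinear phi_bilinear two_neq0).
  by rewrite !delta2_eq0 !subr0 addr0.
- rewrite (deltaC_skew_part_delta2 m_bilinear phi_bilinear two_neq0).
  by rewrite !delta2_eq0 !subr0 !addr0.
Qed.
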